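(* For every max game $\mathcal R$, every sequence of greedy moves starting from an arbitrary routing is finite and terminates at a Nash-routing (so Nash-routings exist), and the price of stability is $PoS=1$, i.e. there is a Nash-routing whose social cost equals the minimum social cost over all routings.
   Context: A routing game is a tuple $\mathcal R=(\mathbf N,G,\mathcal P)$: players $\mathbf N=\{1,\dots,N\}$ ($N\ge1$), a finite graph $G=(V,E)$, and for each player $i$ a nonempty finite set $\mathcal P_i$ of paths in $G$ from a source $u_i$ to a destination $v_i$. A routing is $\mathbf p=[p_1,\dots,p_N]$ with $p_i\in\mathcal P_i$; $(p_i';\mathbf p_{-i})$ denotes the routing obtained by replacing $p_i$ with $p_i'$. $C_e(\mathbf p)$ is the number of players $j$ with $e\in p_j$; $C_i(\mathbf p)=\max_{e\in p_i}C_e(\mathbf p)$; $D_i(\mathbf p)=|p_i|$ (number of edges); $C(\mathbf p)=\max_{e}C_e(\mathbf p)$; $D(\mathbf p)=\max_i|p_i|$. A max game has player cost $pc_i(\mathbf p)=\max(C_i(\mathbf p),D_i(\mathbf p))$ and social cost $SC(\mathbf p)=\max(C(\mathbf p),D(\mathbf p))$. A greedy move by player $i$ takes $\mathbf p$ to $(p_i';\mathbf p_{-i})$ for some $p_i'\in\mathcal P_i$ with strictly smaller $pc_i$. A Nash-routing is a routing $\mathbf p$ with $pc_i(\mathbf p)\le pc_i(p_i';\mathbf p_{-i})$ for all $i$ and all $p_i'\in\mathcal P_i$. With $SC^*$ the minimum social cost over all routings and $\mathbf P$ the set of Nash-routings, $PoS=\inf_{\mathbf p\in\mathbf P}SC(\mathbf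 p)/SC^*$. *)

From mathcomp Require Import all_boot.
Set Implicit Arguments. Unset Strict Implicit. Unset Printing Implicit Defensive.

(* A finite (directed multi)graph: vertex type V, edge type E, ends e = (tail, head). *)
Definition is_path (V E : finType) (ends : E -> V * V) (u v : V) (p : seq E) : Prop :=
  exists ys : seq V, [/\ uniq (u :: ys), last u ys = v & map ends p = zip (u :: ys) ys].

Section Game.
Variables (E : finType) (N : nat).

Definition routing_t := 'I_N -> seq E.

Definition cong_e (r : routing_t) (e : E) : nat := #|[pred j : 'I_N | e \in r j]|.
Definition cong_i (r : routing_t) (i : 'I_N) : nat := \max_(e <- r i) cong_e r e.
Definition len_i (r : routing_t) (i : 'I_N) : nat := size (r i).
Definition pc (r : routing_t) (i : 'I_N) : nat := maxn (cong_i r i) (len_i r i).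
Definition congestion (r : routing_t) : nat := \max_(e : E) cong_e r e.
Definition dilation (r : routing_t) : nat := \max_(i < N) len_i r i.
Definition SC (r : routing_t) : nat := maxn (congestion r) (dilation r).

Definition upd (r : routing_t) (i : 'I_N) (q : seq E) : routing_t :=
  fun j => if j == i then q else r j.

Variable P : 'I_N -> seq (seq E).

Definition is_routing (r : routing_t) : Prop := forall i, r i \in P i.

Definition greedy_move (r r' : routing_t) : Prop :=
  exists i q, [/\ q \in P i, r' = upd r i q & pc r' i < pc r i].

Definition is_nash (r : routing_t) : Prop :=
  is_routing r /\ forall i q, q \in P i -> pc r i <= pc (upd r i q) i.

End Game.

From mathcomp Require Import all_boot.
From Stdlib Require Import Classical.
From Stdlib Require Wf_nat.
Set Implicit Arguments. Unset Strict Implicit. Unset Printing Implicit Defensive.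

(* Max games are potential games, and greedy moves never raise the social cost.

   When player i moves to a path q, the congestion of every edge of q is at
   most i's new cost, and every other edge loses congestion; hence every
   other player's new cost is bounded by the max of its old cost and i's new
   cost, and likewise the social cost is bounded by the max of the old social
   cost and i's new cost.  Two consequences:
   - the potential  Phi r = sum_j (N+1)^(pc r j)  strictly decreases along a
     greedy move (the mover loses a factor N+1, the other N-1 players gain at
     most one copy each of the mover's new term), so greedy sequences are
     finite and their endpoints are Nash-routings;
   - SC does not increase along a greedy move, since the mover's new cost is
     below its old cost, which is at most SC.
   Starting the greedy dynamics from a socially optimal routing therefore
   ends in a Nash-routing of optimal social cost, i.e. PoS = 1. *)

Lemma exists_minimizer (T : Type) (f : T -> nat) (Q : T -> Prop) :
  (exists x, Q x) -> exists x, Q x /\ forall y, Q y -> f x <= f y.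
Proof.
move=> [x0 Qx0]; elim/(@Wf_nat.induction_ltof1 T f): x0 Qx0 => x IH Qx.
case: (classic (exists y, Q y /\ f y < f x)) => [[y [Qy lt_yx]]|no_smaller].
  exact: (IH y (elimT ltP lt_yx) Qy).
exists x; split=> // y Qy; rewrite leqNgt; apply/negP => lt_yx.
by apply: no_smaller; exists y.
Qed.

Section MaxGame.
Variables (E : finType) (N : nat).
Implicit Types (r : routing_t E N) (i j : 'I_N) (q : seq E).

Lemma cong_e_upd r i q e :
  cong_e (upd r i q) e <= maxn (cong_e r e) (pc (upd r i q) i).
Proof.
have [e_in_q|e_notin_q] := boolP (e \in q).
  apply: leq_trans (leq_maxr _ _); apply: leq_trans (leq_maxl _ _).
  apply: (@leq_bigmax_seq _ _ xpredT (cong_e (upd r i q))) => //.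
  by rewrite /upd eqxx.
apply: leq_trans (leq_maxl _ _); apply: subset_leq_card.
apply/subsetP => k; rewrite !inE /upd.
by case: eqP => // _ e_in_rk; rewrite e_in_rk in e_notin_q.
Qed.

Lemma pc_upd_other r i q j : j != i ->
  pc (upd r i q) j <= maxn (pc r j) (pc (upd r i q) i).
Proof.
move=> ji; rewrite {1}/pc geq_max; apply/andP; split; last first.
  by rewrite /len_i /upd (negbTE ji) leq_max /pc leq_maxr.
rewrite /cong_i {1}/upd (negbTE ji); apply/bigmax_leqP_seq => e e_in_rj _.
apply: leq_trans (cong_e_upd r i q e) _.
rewrite geq_max leq_maxr andbT leq_max /pc leq_max.
by rewrite (@leq_bigmax_seq _ _ xpredT (cong_e r)).
Qed.

Lemma pc_le_SC r i : pc r i <= SC r.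
Proof.
rewrite /pc /SC geq_max; apply/andP; split.
  apply: leq_trans (leq_maxl _ _); apply/bigmax_leqP_seq => e _ _.
  exact: (leq_bigmax_cond (P := xpredT)).
by apply: leq_trans (leq_maxr _ _); apply: (leq_bigmax_cond (P := xpredT)).
Qed.

Lemma SC_upd r i q : SC (upd r i q) <= maxn (SC r) (pc (upd r i q) i).
Proof.
rewrite {1}/SC geq_max; apply/andP; split.
  apply/bigmax_leqP => e _; apply: leq_trans (cong_e_upd r i q e) _.
  rewrite geq_max leq_maxr andbT leq_max; apply/orP; left.
  by apply: leq_trans (leq_maxl _ _); apply: (leq_bigmax_cond (P := xpredT)).
apply/bigmax_leqP => j _; have [->|ji] := eqVneq j i.
  by rewrite leq_max /pc leq_maxr orbT.
rewrite /len_i /upd (negbTE ji) leq_max; apply/orP; left.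
apply: leq_trans (leq_maxr _ _).
exact: (leq_bigmax_cond (P := xpredT) (F := len_i r)).
Qed.

Definition potential r : nat := \sum_(j < N) N.+1 ^ pc r j.

Lemma potential_upd_lt r i q :
  pc (upd r i q) i < pc r i -> potential (upd r i q) < potential r.
Proof.
move=> improves; set r' := upd r i q; set c := pc r' i.
rewrite /potential (bigD1 i) //= [X in _ < X](bigD1 i) //= -/c.
have others : \sum_(j < N | j != i) N.+1 ^ pc r' j <=
              \sum_(j < N | j != i) N.+1 ^ pc r j + N.-1 * N.+1 ^ c.
  have card_others : #|[pred j : 'I_N | j != i]| = N.-1.
    by have := cardC1 i; rewrite card_ord => <-; apply: eq_card => j; rewrite !inE.
  rewrite -card_others -sum_nat_const -big_split /=; apply: leq_sum => j ji.
  apply: leq_trans (leq_pexp2l (ltn0Sn N) (pc_upd_other r q ji)) _.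
  by rewrite /maxn; case: ltnP => _; [exact: leq_addl | exact: leq_addr].
apply: leq_ltn_trans (leq_add (leqnn _) others) _.
rewrite addnCA [X in _ < X]addnC ltn_add2l.
have N_pos : 0 < N by apply: leq_ltn_trans (ltn_ord i).
rewrite -{1}(mul1n (N.+1 ^ c)) -mulnDl add1n prednK //.
apply: leq_trans (leq_pexp2l (ltn0Sn N) improves).
by rewrite expnS ltn_pmul2r ?expn_gt0.
Qed.

Variable P : 'I_N -> seq (seq E).

Lemma greedy_move_potential r r' :
  greedy_move P r r' -> potential r' < potential r.
Proof. by case=> i [q [_ -> improves]]; apply: potential_upd_lt. Qed.

Lemma greedy_move_wf : well_founded (fun r2 r1 => greedy_move P r1 r2).
Proof.
apply: (@Wf_nat.well_founded_lt_compat _ potential) => r2 r1 move12.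
exact/ltP/greedy_move_potential.
Qed.

Lemma greedy_move_routing r r' :
  is_routing P r -> greedy_move P r r' -> is_routing P r'.
Proof.
by move=> rP [i [q [qP -> _]]] j; rewrite /upd; case: eqP => [->|].
Qed.

Lemma greedy_move_SC r r' : greedy_move P r r' -> SC r' <= SC r.
Proof.
case=> i [q [_ -> improves]]; apply: leq_trans (SC_upd r i q) _.
by rewrite geq_max leqnn (leq_trans (ltnW improves) (pc_le_SC r i)).
Qed.

Lemma stuck_is_nash r :
  is_routing P r -> (forall r', ~ greedy_move P r r') -> is_nash P r.
Proof.
move=> rP stuck; split=> // i q qP; rewrite leqNgt; apply/negP => improves.
by apply: (stuck (upd r i q)); exists i, q.
Qed.

Lemma nash_below r :
  is_routing P r -> exists rs, is_nash P rs /\ SC rs <= SC r.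
Proof.
elim/(@Wf_nat.induction_ltof1 _ potential): r => r IH rP.
case: (classic (exists r', greedy_move P r r')) => [[r' move_rr']|stuck].
  have [rs [rs_nash rs_le]] := IH r' (elimT ltP (greedy_move_potential move_rr'))
                                  (greedy_move_routing rP move_rr').
  by exists rs; split=> //; apply: leq_trans rs_le (greedy_move_SC move_rr').
exists r; split=> //; apply: stuck_is_nash => // r' move_rr'.
by apply: stuck; exists r'.
Qed.

End MaxGame.

Theorem mainTheorem2 (V E : finType) (ends : E -> V * V) (N : nat) (hN : 0 < N)
    (src dst : 'I_N -> V) (P : 'I_N -> seq (seq E))
    (hPne : forall i, P i != [::])
    (hPpath : forall i q, q \in P i -> is_path ends (src i) (dst i) q) :
  (* every sequence of greedy moves from any routing is finite *)
  (forall r : routing_t E N, is_routing P r ->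
     Acc (fun r2 r1 => greedy_move P r1 r2) r) /\
  (* a routing admitting no greedy move (end of a maximal sequence) is a Nash-routing *)
  (forall r : routing_t E N, is_routing P r ->
     (forall r', ~ greedy_move P r r') -> is_nash P r) /\
  (* PoS = 1: some Nash-routing attains the optimal social cost *)
  (exists r : routing_t E N, is_nash P r /\
     forall r' : routing_t E N, is_routing P r' -> SC r <= SC r').
Proof.
split; first by move=> r _; apply: greedy_move_wf.
split; first exact: stuck_is_nash.
have some_routing : exists r : routing_t E N, is_routing P r.
  exists (fun i => head [::] (P i)) => i.
  by case: (P i) (hPne i) => //= q qs _; rewrite mem_head.
have [ropt [ropt_P ropt_min]] := exists_minimizer (@SC E N) some_routing.
have [rs [rs_nash rs_le]] := nash_below ropt_P.
by exists rs; split=> // r' r'P; apply: leq_trans rs_le (ropt_min r' r'P).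
Qed.
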